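(* Let $N\ge3$ and let $G$ be the graph on vertices $\{u_{1j},b_{1j},u_{2j}: j\in[N]\}$ with edges $u_{1j}\sim u_{1k}$ and $u_{2j}\sim u_{2k}$ for $j\ne k$, $b_{1j}\sim u_{1k}$ for all $j,k$, and $u_{1j}\sim u_{2j}$, $u_{2j}\sim b_{1j}$ for all $j$. For $U\subseteq[N]$ with $2\le|U|\le N-1$, $m\in[N]\setminus U$ and $U\subseteq V\subseteq[N]$, let $\mathbf v(m,U,V)$ be the weight vector with $u_{1m}=|U|^{-1}$, $b_{1j}=1-|U|^{-1}$ for $j\in V$, $u_{2j}=|U|^{-1}$ for $j\in U$, and all other coordinates $0$. Then the fractional weighted chromatic number of $G$ with weight vector $\mathbf v(m,U,V)$ is at most $1+|U|^{-1}-|U|^{-2}$, and hence at most $1.25$.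
   Context: The fractional weighted chromatic number of a graph with weights $w\ge0$ on vertices is $\min\sum_i\lambda_i$ over nonnegative reals $\lambda_i$ and stable sets $S_i$ with $\sum_i\lambda_i\chi^{S_i}=w$, where $\chi^S$ is the incidence vector of $S$. *)

From HB Require Import structures.
From mathcomp Require Import all_boot all_order all_algebra.
From mathcomp Require Import classical_sets reals.
Set Implicit Arguments. Unset Strict Implicit. Unset Printing Implicit Defensive.
Import Order.TTheory GRing.Theory Num.Theory.
Local Open Scope ring_scope.
Local Open Scope classical_set_scope.

(* Vertices (k, j) : 'I_3 * 'I_N with k = 0 for u_{1j}, k = 1 for b_{1j},
   k = 2 for u_{2j}. *)
Definition vtx (N : nat) := ('I_3 * 'I_N)%type.

Definition edge0 (N : nat) (x y : vtx N) : bool :=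
  let: (kx, jx) := x in let: (ky, jy) := y in
  [|| [&& (kx == 0 :> nat), (ky == 0 :> nat) & jx != jy],
      [&& (kx == 2 :> nat), (ky == 2 :> nat) & jx != jy],
      (kx == 1 :> nat) && (ky == 0 :> nat),
      [&& (kx == 0 :> nat), (ky == 2 :> nat) & jx == jy]
    | [&& (kx == 2 :> nat), (ky == 1 :> nat) & jx == jy]].

Definition adjG (N : nat) (x y : vtx N) : bool := edge0 x y || edge0 y x.

Definition stable (N : nat) (S : {set vtx N}) : bool :=
  [forall x in S, forall y in S, ~~ adjG x y].

Definition fwcn (R : realType) (N : nat) (w : vtx N -> R) : R :=
  inf [set t : R | exists lam : {set vtx N} -> R,
         (forall S, 0 <= lam S) /\
         (forall x, \sum_(S : {set vtx N} | stable S) lam S * (x \in S)%:R = w x) /\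
         t = \sum_(S : {set vtx N} | stable S) lam S].

Definition wvec (R : realType) (N : nat) (m : 'I_N) (U V : {set 'I_N})
  (x : vtx N) : R :=
  let: (k, j) := x in
  if (k == 0 :> nat) then (if j == m then (#|U|%:R)^-1 else 0)
  else if (k == 1 :> nat) then (if j \in V then 1 - (#|U|%:R)^-1 else 0)
  else (if j \in U then (#|U|%:R)^-1 else 0).

(* With a = 1/|U|, the weight v(m,U,V) is covered by three families of stable
   sets: {u_1m, u_2j} with weight a^2 and {u_2j} ∪ {b_1k : k ∈ V, k ≠ j} with
   weight a - a^2 for each j ∈ U, and {b_1k : k ∈ U} with weight a - a^2.
   Every b_1k with k ∈ V then receives (a - a^2) |U| = 1 - a, and the total
   weight is |U| a + a - a^2 = 1 + a - a^2 <= 5/4. *)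
From HB Require Import structures.
From mathcomp Require Import all_boot all_order all_algebra.
From mathcomp Require Import classical_sets reals.
From mathcomp Require Import lra.
Set Implicit Arguments. Unset Strict Implicit. Unset Printing Implicit Defensive.
Import Order.TTheory GRing.Theory Num.Theory.
Local Open Scope ring_scope.

Lemma fwcn_le (R : realType) (N : nat) (w : vtx N -> R)
    (lam : {set vtx N} -> R) :
  (forall S, 0 <= lam S) ->
  (forall x, \sum_(S : {set vtx N} | stable S) lam S * (x \in S)%:R = w x) ->
  fwcn w <= \sum_(S : {set vtx N} | stable S) lam S.
Proof.
move=> lam_ge0 lam_cover; apply: ge_inf; last by exists lam.
exists 0 => _ [mu [mu_ge0 [_ ->]]].
by apply: sumr_ge0 => S _; exact: mu_ge0.
Qed.

Lemma sum_stable_eq1 (R : pzRingType) (N : nat) (T : {set vtx N})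
    (f : {set vtx N} -> R) :
  stable T -> \sum_(S : {set vtx N} | stable S) (S == T)%:R * f S = f T.
Proof.
move=> stT; rewrite (bigD1 T) //= eqxx mul1r big1 ?addr0 //.
by move=> S /andP[_ /negbTE ->]; rewrite mul0r.
Qed.

Lemma sumr_eq_mem (R : pzRingType) (I : finType) (A : {set I}) (i0 : I) :
  \sum_(i in A) ((i0 == i)%:R : R) = (i0 \in A)%:R.
Proof.
case: (boolP (i0 \in A)) => [i0A | i0A].
  rewrite (bigD1 i0) //= eqxx big1 ?addr0 // => i /andP[_ ii0].
  by rewrite eq_sym (negbTE ii0).
by apply: big1 => i iA; case: eqP iA => // <- iA; rewrite iA in i0A.
Qed.

Lemma sumr_neq_mem (R : pzRingType) (I : finType) (A : {set I}) (i0 : I) :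
  \sum_(i in A) ((i0 != i)%:R : R) = #|A|%:R - (i0 \in A)%:R.
Proof.
rewrite -sumr_eq_mem -sumr_const -sumrB; apply: eq_bigr => i _.
by case: (i0 == i); rewrite ?subrr ?subr0.
Qed.

Lemma subr_sqr_le (R : realFieldType) (x : R) : x - x ^+ 2 <= 4%:R^-1.
Proof. by have := sqr_ge0 (x - 2^-1); rewrite !expr2; nra. Qed.

Lemma stableP (N : nat) (S : {set vtx N}) :
  reflect (forall x y, x \in S -> y \in S -> ~~ adjG x y) (stable S).
Proof.
apply: (iffP forallP) => [stS x y xS yS | stS x].
  by move/implyP/(_ xS)/forallP/(_ y)/implyP/(_ yS): (stS x).
by apply/implyP => xS; apply/forallP => y; apply/implyP; exact: stS.
Qed.

Section Colouring.
Variables (R : realType) (N : nat) (m : 'I_N) (U V : {set 'I_N}).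
Hypothesis m_notin_U : m \notin U.

Definition set_u1m_u2 (j : 'I_N) : {set vtx N} :=
  [set x : vtx N | ((x.1 == 0 :> nat) && (x.2 == m))
                   || ((x.1 == 2 :> nat) && (x.2 == j))].

Definition set_u2_bV (j : 'I_N) : {set vtx N} :=
  [set x : vtx N | ((x.1 == 2 :> nat) && (x.2 == j))
                   || [&& x.1 == 1 :> nat, x.2 \in V & x.2 != j]].

Definition set_bU : {set vtx N} := [set x : vtx N | (x.1 == 1 :> nat) && (x.2 \in U)].

Lemma stable_u1m_u2 j : j \in U -> stable (set_u1m_u2 j).
Proof.
move=> jU; have jm : j != m by apply: contraNneq m_notin_U => <-.
apply/stableP => x y; rewrite !inE.
move: x y => [[[|[|[|k]]] hk] jx] [[[|[|[|k']]] hk'] jy] //=;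
  rewrite /adjG /edge0 /= ?andbF ?orbF //=.
all: by move=> /eqP -> /eqP ->; rewrite ?eqxx //= ?(eq_sym m j) ?(negbTE jm).
Qed.

Lemma stable_u2_bV j : stable (set_u2_bV j).
Proof.
apply/stableP => x y; rewrite !inE.
move: x y => [[[|[|[|k]]] hk] jx] [[[|[|[|k']]] hk'] jy] //=;
  rewrite /adjG /edge0 /= ?andbF ?orbF //=.
all: try (move=> /andP[_ h] /eqP ->); try (move=> /eqP -> /andP[_ h]);
  try (move=> /eqP -> /eqP ->).
all: by rewrite ?eqxx // eq_sym.
Qed.

Lemma stable_bU : stable set_bU.
Proof.
apply/stableP => x y; rewrite !inE.
by move: x y => [[[|[|[|k]]] hk] jx] [[[|[|[|k']]] hk'] jy].
Qed.

Variable a : R.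

Definition colouring (S : {set vtx N}) : R :=
  \sum_(j in U) (a ^+ 2 * (S == set_u1m_u2 j)%:R
                 + (a - a ^+ 2) * (S == set_u2_bV j)%:R)
  + (a - a ^+ 2) * (S == set_bU)%:R.

Lemma colouring_ge0 S : 0 <= a <= 1 -> 0 <= colouring S.
Proof.
case/andP=> a_ge0 a_le1.
have aa_ge0 : 0 <= a - a ^+ 2 by rewrite subr_ge0 expr2 ler_piMr.
apply: addr_ge0; last exact: mulr_ge0.
by apply: sumr_ge0 => j _; apply: addr_ge0; apply: mulr_ge0; rewrite ?exprn_ge0.
Qed.

Lemma sum_colouring (g : {set vtx N} -> R) :
  \sum_(S | stable S) colouring S * g S =
  \sum_(j in U) (a ^+ 2 * g (set_u1m_u2 j) + (a - a ^+ 2) * g (set_u2_bV j))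
  + (a - a ^+ 2) * g set_bU.
Proof.
under eq_bigr => S _ do rewrite mulrDl mulr_suml.
rewrite big_split /= exchange_big /=; congr (_ + _).
  apply: eq_bigr => j jU.
  under eq_bigr => S _ do rewrite mulrDl -!mulrA.
  rewrite big_split /= -!mulr_sumr.
  by rewrite !sum_stable_eq1 ?stable_u2_bV ?stable_u1m_u2 // mulrA -expr2.
under eq_bigr => S _ do rewrite -mulrA.
by rewrite -mulr_sumr sum_stable_eq1 //; exact: stable_bU.
Qed.

Hypothesis a_mul_U : a * #|U|%:R = 1.
Hypothesis U_sub_V : U \subset V.

Lemma colouring_cover x :
  \sum_(S | stable S) colouring S * (x \in S)%:R = wvec R m U V x.
Proof.
have U_neq0 : (#|U|%:R : R) != 0.
  by apply: contra_eq_neq a_mul_U => ->; rewrite mulr0 eq_sym oner_neq0.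
have inv_U : (#|U|%:R^-1 : R) = a by apply: (mulIf U_neq0); rewrite mulVf ?a_mul_U.
rewrite sum_colouring.
case: x => [[[|[|[|k]]] hk] j0] //;
  under eq_bigr => j _ do rewrite /set_u1m_u2 /set_u2_bV !inE /= ?orbF ?andbF;
  rewrite /set_bU !inE /= ?orbF ?andbF ?inv_U.
- rewrite !mulr0 !addr0 sumr_const.
  case: (j0 == m); last by rewrite mulr0 mul0rn.
  by rewrite mulr1 -mulr_natr expr2 -mulrA a_mul_U mulr1.
- under eq_bigr => j _ do rewrite mulr0 add0r.
  case: (boolP (j0 \in V)) => j0V /=.
    rewrite -mulr_sumr sumr_neq_mem -mulrDr subrK mulrBl a_mul_U.
    by rewrite expr2 -mulrA a_mul_U mulr1.
  have -> : (j0 \in U) = false.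
    by apply/negbTE; apply: contraNN j0V => /(fintype.subsetP U_sub_V).
  by rewrite big1 ?add0r ?mulr0 // => j _; rewrite mulr0.
- rewrite mulr0 addr0.
  under eq_bigr => j _ do rewrite -mulrDl (addrC (a ^+ 2)) subrK.
  by rewrite -mulr_sumr sumr_eq_mem; case: (j0 \in U); rewrite ?mulr1 ?mulr0.
Qed.

Lemma colouring_total : \sum_(S | stable S) colouring S = 1 + a - a ^+ 2.
Proof.
have := sum_colouring (fun _ => 1); under eq_bigr => S _ do rewrite mulr1.
move=> ->; rewrite !mulr1.
under eq_bigr => j _ do rewrite (addrC (a ^+ 2)) subrK.
by rewrite sumr_const -mulr_natr a_mul_U addrA.
Qed.

End Colouring.

Theorem theorem11 (R : realType) (N : nat) (m : 'I_N) (U V : {set 'I_N}) :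
  (3 <= N)%N -> (2 <= #|U|)%N -> (#|U| <= N - 1)%N -> m \notin U ->
  U \subset V ->
  fwcn (wvec R m U V) <= 1 + (#|U|%:R)^-1 - (#|U|%:R)^-2 /\
  fwcn (wvec R m U V) <= 5%:R / 4%:R.
Proof.
(* N >= 3 and |U| <= N - 1 only make the hypotheses satisfiable; the bound
   does not need them. *)
move=> _ U_ge2 _ m_notin_U U_sub_V.
rewrite -exprVn; set a : R := (#|U|%:R)^-1.
have U_neq0 : (#|U|%:R : R) != 0 by rewrite pnatr_eq0 -lt0n (leq_trans _ U_ge2).
have a_mul_U : a * #|U|%:R = 1 by rewrite mulVf.
have a_01 : 0 <= a <= 1.
  rewrite invr_ge0 ler0n /= invf_le1 ?ltr0n ?(leq_trans _ U_ge2) //.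
  by rewrite ler1n (leq_trans _ U_ge2).
have fwcn_le_a : fwcn (wvec R m U V) <= 1 + a - a ^+ 2.
  rewrite -(colouring_total V m_notin_U a_mul_U).
  apply: fwcn_le => [S | x]; first exact: colouring_ge0.
  exact: colouring_cover.
split=> //; apply: (le_trans fwcn_le_a).
by have := subr_sqr_le a; lra.
Qed.
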